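(* There is no simple complex abelian surface $A$ with $\mathfrak{d}_A=3$.
   Context: If $A$ is a complex abelian surface with period matrix $(\tau\ \ I_2)$, $\tau=(\tau_{ij})\in M_2(\mathbb{C})$, $\det\operatorname{Im}\tau\ne0$ (i.e. $A=\mathbb{C}^2/\Lambda$ with $\Lambda$ generated by the columns), then $\mathfrak{d}_A=[\mathbb{Q}(\{\tau_{ij}\}):\mathbb{Q}]$; this does not depend on the choice of such period matrix. *)

From HB Require Import structures.
From mathcomp Require Import all_boot all_order all_algebra.
From mathcomp Require Import reals.
From mathcomp.real_closed Require Import complex.
Set Implicit Arguments. Unset Strict Implicit. Unset Printing Implicit Defensive.
Import Order.TTheory GRing.Theory Num.Theory.
Local Open Scope ring_scope.

Section AbSurf.
Variable R : realType.
Local Notation C := (R[i]).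

Definition cvec := 'cV[C]_2.

(* The lattice Lambda generated by the columns of the period matrix (tau I_2):
   m1 tau_{.1} + m2 tau_{.2} + m3 e_1 + m4 e_2 with m : Z^4. *)
Definition lattice_pt (tau : 'M[C]_2) (m : 'I_4 -> int) : cvec :=
  (m 0%R)%:~R *: col 0 tau + (m 1%R)%:~R *: col 1 tau
  + (m 2%R)%:~R *: delta_mx 0 0 + (m 3%R)%:~R *: delta_mx 1 0.

Definition in_lattice (tau : 'M[C]_2) (v : cvec) : Prop :=
  exists m : 'I_4 -> int, v = lattice_pt tau m.

(* (tau I_2) is a period matrix of a complex torus: det Im tau <> 0 *)
Definition period_matrix_ok (tau : 'M[C]_2) : Prop :=
  \det (map_mx (fun z : C => 'Im z) tau) != 0.

Definition hform (H : 'M[C]_2) (v w : cvec) : C :=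
  ((map_mx Num.conj v)^T *m H *m w) 0 0.

(* The torus C^2/Lambda is an abelian surface: it carries a polarization,
   i.e. a positive definite Hermitian form H whose imaginary part is
   integer valued on Lambda x Lambda (Riemann conditions). *)
Definition is_abelian_surface (tau : 'M[C]_2) : Prop :=
  period_matrix_ok tau /\
  exists H : 'M[C]_2,
    map_mx Num.conj H^T = H /\
    (forall v : cvec, v != 0 -> 0 < hform H v v) /\
    (forall v w : cvec, in_lattice tau v -> in_lattice tau w ->
        exists k : int, 'Im (hform H v w) = k%:~R).

(* A has a one-dimensional complex subtorus: a complex line in C^2 meeting
   Lambda in a rank-2 lattice, i.e. two R-linearly independent lattice vectors
   that are C-linearly dependent. *)
Definition has_elliptic_subtorus (tau : 'M[C]_2) : Prop :=
  exists v w : cvec, in_lattice tau v /\ in_lattice tau w /\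
    \det (row_mx v w) = 0 /\
    (forall a b : R, (a%:C)%C *: v + (b%:C)%C *: w = 0 -> a = 0 /\ b = 0).

(* Simple abelian surface: its only abelian subvarieties are 0 and A, i.e.
   it has no 1-dimensional complex subtorus. *)
Definition simple_abelian_surface (tau : 'M[C]_2) : Prop :=
  is_abelian_surface tau /\ ~ has_elliptic_subtorus tau.

Definition is_subfield (K : C -> Prop) : Prop :=
  K 1 /\ (forall x y, K x -> K y -> K (x - y)) /\
  (forall x y, K x -> K y -> K (x * y)) /\ (forall x, K x -> K x^-1).

Definition gen_field (S : C -> Prop) (x : C) : Prop :=
  forall K, is_subfield K -> (forall s, S s -> K s) -> K x.

Definition field_degree_eq (S : C -> Prop) (n : nat) : Prop :=
  exists b : 'I_n -> C,
    (forall i, gen_field S (b i)) /\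
    (forall q : 'I_n -> rat, \sum_i ratr (q i) * b i = 0 -> forall i, q i = 0) /\
    (forall x, gen_field S x -> exists q : 'I_n -> rat, x = \sum_i ratr (q i) * b i).

Definition entries (tau : 'M[C]_2) (z : C) : Prop := exists i j, z = tau i j.

Definition dA_eq (tau : 'M[C]_2) (n : nat) : Prop := field_degree_eq (entries tau) n.

End AbSurf.

From HB Require Import structures.
From mathcomp Require Import all_boot all_order all_algebra.
From mathcomp Require Import reals.
From mathcomp.real_closed Require Import complex.
From mathcomp Require Import ring.
Set Implicit Arguments. Unset Strict Implicit. Unset Printing Implicit Defensive.
Import Order.TTheory GRing.Theory Num.Theory.
Local Open Scope ring_scope.

(* Let K = Q(tau_ij), a cubic field, and regard V = K^2 as a 6-dimensional Q-space.
   The lattice spans at most 4 dimensions of V, so a nonzero Q-linear form xi on V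
   kills it; a further 3 linear conditions give a vector w with xi (K w) = 0.  The
   4 periods and the 3-dimensional line K w then lie in the 5-dimensional kernel of
   xi and meet in dimension >= 2: among the 6 coordinate equations saying that the
   integral combination of periods given by m is lam * w, one is implied by the
   others via xi, and in its place we may impose an extra linear condition on m.  This yields two independent lattice
   vectors on the complex line C w; they are R-independent because Im tau is
   invertible, so C w / (C w cap Lambda) is an elliptic curve in A. *)

Lemma det_mx22 (F : comNzRingType) (A : 'M[F]_2) :
  \det A = A 0 0 * A 1 1 - A 0 1 * A 1 0.
Proof.
rewrite (expand_det_row _ 0) !big_ord_recl big_ord0 /cofactor !det_mx11 !mxE /=.
have -> : lift 0 (0 : 'I_1) = 1 :> 'I_2 by apply: val_inj.
have -> : lift 1 (0 : 'I_1) = 0 :> 'I_2 by apply: val_inj.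
have -> : ord0 = 0 :> 'I_2 by apply: val_inj.
by rewrite expr0 expr1 addr0 mul1r mulN1r mulrN.
Qed.

Lemma det_row_mx_collinear (F : comNzRingType) (v : 'cV[F]_2) (a a' : F) :
  \det (row_mx (a *: v) (a' *: v)) = 0.
Proof.
rewrite det_mx22 !mxE.
have -> : split (0 : 'I_(1 + 1)) = inl 0 by apply: (canLR unsplitK); apply: val_inj.
have -> : split (1 : 'I_(1 + 1)) = inr 0 by apply: (canLR unsplitK); apply: val_inj.
rewrite !mxE; ring.
Qed.

Lemma det_mx22_kernel_trivial (F : fieldType) (A : 'M[F]_2) (a b : F) :
  \det A != 0 -> (forall r, a * A r 0 + b * A r 1 = 0) -> a = 0 /\ b = 0.
Proof.
rewrite det_mx22 => detA_neq0 Aab.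
have Ea : a * (A 0 0 * A 1 1 - A 0 1 * A 1 0) =
  A 1 1 * (a * A 0 0 + b * A 0 1) - A 0 1 * (a * A 1 0 + b * A 1 1) by ring.
have Eb : b * (A 0 0 * A 1 1 - A 0 1 * A 1 0) =
  A 0 0 * (a * A 1 0 + b * A 1 1) - A 1 0 * (a * A 0 0 + b * A 0 1) by ring.
rewrite !Aab !mulr0 subrr in Ea Eb.
by split; apply: (mulIf detA_neq0); rewrite mul0r.
Qed.

Lemma underdetermined_system (F : fieldType) (I J : finType) (g : J -> I -> F) :
  (#|J| < #|I|)%N ->
  exists x : I -> F, (exists i, x i != 0) /\ forall j, \sum_i x i * g j i = 0.
Proof.
move=> ltJI; pose A : 'M[F]_(#|I|, #|J|) := \matrix_(k, l) g (enum_val l) (enum_val k).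
have /rowV0Pn[u /sub_kermxP uA /rV0Pn[k uk]] : kermx A != 0.
  by rewrite -mxrank_eq0 mxrank_ker subn_eq0 -ltnNge (leq_ltn_trans (rank_leq_col A)).
exists (fun i => u 0 (enum_rank i)); split; first by exists (enum_val k); rewrite enum_valK.
move=> j; transitivity ((u *m A) 0 (enum_rank j)); last by rewrite uA mxE.
rewrite mxE (reindex _ (onW_bij _ (@enum_rank_bij I))).
by apply: eq_bigr => i _; rewrite !mxE !enum_rankK.
Qed.

Lemma rat_int_multiple (I : finType) (x : I -> rat) :
  exists (d : rat) (z : I -> int), d != 0 /\ forall i, (z i)%:~R = d * x i.
Proof.
pose d : rat := \prod_i (denq (x i))%:~R.
exists d, (fun i => numq (x i) * \prod_(j | j != i) denq (x j)); split.
  by apply/prodf_neq0 => i _; rewrite intr_eq0 denq_neq0.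
move=> i; rewrite intrM rmorph_prod numqE [d](bigD1 i) //=.
by rewrite -mulrA mulrC.
Qed.

Lemma underdetermined_int_system (I J : finType) (g : J -> I -> rat) :
  (#|J| < #|I|)%N ->
  exists x : I -> int, (exists i, x i != 0) /\ forall j, \sum_i (x i)%:~R * g j i = 0.
Proof.
move=> /(underdetermined_system g) [x [[i0 xi0] xg]].
have [d [z [d_neq0 zE]]] := rat_int_multiple x.
exists z; split; first by exists i0; rewrite -(intr_eq0 rat) zE mulf_neq0.
by move=> j; under eq_bigr do rewrite zE -mulrA; rewrite -mulr_sumr xg mulr0.
Qed.

Lemma redundant_equation (F : idomainType) (I : finType) (xi f : I -> F) (i0 : I) :
  xi i0 != 0 -> \sum_i xi i * f i = 0 -> (forall i, i != i0 -> f i = 0) -> f i0 = 0.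
Proof.
move=> xi0 sum0 f0; move: sum0; rewrite (bigD1 i0) //= big1 ?addr0.
  by move/eqP; rewrite mulf_eq0 (negbTE xi0) => /eqP.
by move=> i /f0 ->; rewrite mulr0.
Qed.

Section GeneratedField.
Variables (R : realType) (S : R[i] -> Prop).

Lemma gen_field1 : gen_field S 1.
Proof. by move=> K [K1 _]. Qed.

Lemma gen_field_mem s : S s -> gen_field S s.
Proof. by move=> Ss K _; apply. Qed.

Lemma gen_fieldM x y : gen_field S x -> gen_field S y -> gen_field S (x * y).
Proof.
move=> Sx Sy K K_field SK; have [_ [_ [KM _]]] := K_field.
exact: KM (Sx K K_field SK) (Sy K K_field SK).
Qed.

End GeneratedField.

Section RatCoordinates.
Variables (L : numFieldType) (n : nat) (b : 'I_n -> L).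

Definition rcomb (q : 'I_n -> rat) : L := \sum_k ratr (q k) * b k.

Lemma rcomb_coords2 (I J : finType) (f : I -> J -> L) :
  (forall i j, exists q, f i j = rcomb q) ->
  exists t : I -> J -> 'I_n -> rat, forall i j, f i j = rcomb (t i j).
Proof.
move=> f_span.
apply: (@fin_all_exists _ _ (fun i t => forall j, f i j = rcomb (t j))) => i.
exact: (@fin_all_exists _ _ (fun j q => f i j = rcomb q)).
Qed.

Lemma rcomb_sum (I : finType) (a : I -> rat) (q : I -> 'I_n -> rat) :
  rcomb (fun k => \sum_l a l * q l k) = \sum_l ratr (a l) * rcomb (q l).
Proof.
rewrite /rcomb; under eq_bigr do rewrite rmorph_sum /= mulr_suml.
rewrite exchange_big; apply: eq_bigr => l _; rewrite mulr_sumr.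
by apply: eq_bigr => k _; rewrite rmorphM /= mulrA.
Qed.

Lemma rcombZ a q : rcomb (fun k => a * q k) = ratr a * rcomb q.
Proof. by rewrite /rcomb mulr_sumr; apply: eq_bigr => k _; rewrite rmorphM mulrA. Qed.

Hypothesis b_free : forall q, rcomb q = 0 -> forall k, q k = 0.

Lemma rcomb_neq0 q : (exists k, q k != 0) -> rcomb q != 0.
Proof. by move=> [k qk]; apply: contra qk => /eqP/b_free->. Qed.

Variable c : 'I_n -> 'I_n -> 'I_n -> rat.
Hypothesis b_mul : forall i j, b i * b j = rcomb (c i j).

Lemma rcombM y v : rcomb y * rcomb v = rcomb (fun k => \sum_i y i * \sum_j v j * c i j k).
Proof.
rewrite rcomb_sum {1}/rcomb mulr_suml; apply: eq_bigr => i _.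
rewrite rcomb_sum -mulrA; congr (_ * _).
rewrite /rcomb mulr_sumr; apply: eq_bigr => j _.
by rewrite mulrCA b_mul.
Qed.

End RatCoordinates.

Section Periods.
Variables (R : realType) (tau : 'M[R[i]]_2).

Definition period_comb (x : 'I_4 -> R[i]) : 'cV[R[i]]_2 :=
  x 0 *: col 0 tau + x 1 *: col 1 tau + x 2 *: delta_mx 0 0 + x 3 *: delta_mx 1 0.

Lemma period_combE x r :
  period_comb x r 0 = x 0 * tau r 0 + x 1 * tau r 1 + x 2 * (r == 0)%:R + x 3 * (r == 1)%:R.
Proof. by rewrite !mxE /= !eqxx !andbT. Qed.

Lemma period_comb_real_eq0 x : period_matrix_ok tau ->
  (forall l, x l \is Num.real) -> period_comb x = 0 -> forall l, x l = 0.
Proof.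
move=> tau_ok x_real x0.
have comp0 r : x 0 * tau r 0 + x 1 * tau r 1 + x 2 * (r == 0)%:R + x 3 * (r == 1)%:R = 0.
  by rewrite -period_combE x0 mxE.
have [x_0 x_1] : x 0 = 0 /\ x 1 = 0.
  apply: det_mx22_kernel_trivial tau_ok _ => r; rewrite !mxE.
  have := congr1 (fun z => 'Im z) (comp0 r); rewrite !raddfD /= !ImMl ?rpredM ?realn //.
  by rewrite !(Creal_ImP _ (realn _ _)) !mulr0 !addr0 raddf0.
have := comp0 0; have := comp0 1; rewrite x_0 x_1 /= !mul0r !add0r !mulr1 !mulr0 add0r addr0.
move=> x_3 x_2 l; have : l \in [:: 0; 1; 2; 3] by case: l => -[|[|[|[|//]]]].
by rewrite !inE => /or4P[] /eqP->.
Qed.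

Lemma lattice_pt_real_indep (m m' : 'I_4 -> int) (l0 l1 : 'I_4) :
  period_matrix_ok tau -> m l0 != 0 -> m' l0 = 0 -> m' l1 != 0 ->
  forall a a' : R, (a%:C)%C *: lattice_pt tau m + (a'%:C)%C *: lattice_pt tau m' = 0 ->
  a = 0 /\ a' = 0.
Proof.
move=> tau_ok ml0 m'l0 m'l1 a a' comb0.
have real_aC (k : R) : (k%:C)%C \is Num.real by apply/complex_realP; exists k.
have coef0 : forall l, (a%:C)%C * (m l)%:~R + (a'%:C)%C * (m' l)%:~R = 0.
  apply: period_comb_real_eq0 tau_ok _ _ => [l|].
    by rewrite rpredD ?rpredM ?real_aC ?realz.
  by rewrite -comb0; apply/matrixP => r s; rewrite !mxE; ring.
have a0 : a = 0.
  move/eqP: (coef0 l0); rewrite m'l0 mulr0 addr0 mulf_eq0 intr_eq0 (negbTE ml0) orbF.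
  by rewrite fmorph_eq0 => /eqP.
split=> //; move/eqP: (coef0 l1); rewrite a0 mul0r add0r mulf_eq0 intr_eq0 (negbTE m'l1).
by rewrite orbF fmorph_eq0 => /eqP.
Qed.

End Periods.

Section CubicPeriodField.
Variables (R : realType) (b : 'I_3 -> R[i]) (c : 'I_3 -> 'I_3 -> 'I_3 -> rat).
Hypothesis b_free : forall q, rcomb b q = 0 -> forall k, q k = 0.
Hypothesis b_mul : forall i j, b i * b j = rcomb b (c i j).
Variables (tau : 'M[R[i]]_2) (t : 'I_2 -> 'I_2 -> 'I_3 -> rat) (e : 'I_3 -> rat).
Hypothesis tau_coord : forall r s, tau r s = rcomb b (t r s).
Hypothesis one_coord : 1 = rcomb b e.

Local Notation coord := ('I_2 * 'I_3)%type.

(* A vector of K^2 is encoded by x : coord -> rat, its entry r being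
   rcomb b (fun k => x (r, k)); period_coord l encodes the l-th column of (tau I_2)
   and mulb_coord i x encodes b i *: x. *)

Definition period_coord (l : 'I_4) (p : coord) : rat :=
  match val l with
  | 0 => t p.1 0 p.2
  | 1 => t p.1 1 p.2
  | 2 => (p.1 == 0)%:R * e p.2
  | _ => (p.1 == 1)%:R * e p.2
  end.

Definition mulb_coord (i : 'I_3) (x : coord -> rat) (p : coord) : rat :=
  \sum_j x (p.1, j) * c i j p.2.

Lemma lattice_pt_coord m r :
  lattice_pt tau m r 0 = rcomb b (fun k => \sum_l (m l)%:~R * period_coord l (r, k)).
Proof.
rewrite rcomb_sum !big_ord_recl big_ord0 addr0 /period_coord /= !rcombZ -!one_coord -!tau_coord.
rewrite /lattice_pt !mxE /= !ratr_int.
have -> : lift ord0 ord0 = 1 :> 'I_4 by apply/val_inj.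
have -> : lift ord0 (lift ord0 ord0) = 2 :> 'I_4 by apply/val_inj.
have -> : lift ord0 (lift ord0 (lift ord0 ord0)) = 3 :> 'I_4 by apply/val_inj.
have -> : ord0 = 0 :> 'I_4 by apply/val_inj.
by rewrite !eqxx !andbT !rmorph_nat !mulr1 !addrA.
Qed.

Lemma sum_coord (x : coord -> rat) : \sum_p x p = \sum_r \sum_k x (r, k).
Proof. by rewrite pair_bigA; apply: eq_bigr => -[]. Qed.

Lemma mulb_coord_transpose i (xi x : coord -> rat) :
  \sum_p xi p * mulb_coord i x p = \sum_p x p * \sum_k xi (p.1, k) * c i p.2 k.
Proof.
rewrite !sum_coord; apply: eq_bigr => r _ /=; rewrite /mulb_coord /=.
under eq_bigr do rewrite mulr_sumr; rewrite exchange_big; apply: eq_bigr => j _.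
by rewrite mulr_sumr; apply: eq_bigr => k _; rewrite mulrCA.
Qed.

Lemma exists_functional_vanishing_on_periods : exists (xi : coord -> rat) (p0 : coord),
  xi p0 != 0 /\ forall l, \sum_p xi p * period_coord l p = 0.
Proof.
have [xi [[p0 xi_p0] xi_periods]] := @underdetermined_system _ _ _ period_coord
  ltac:(by rewrite card_prod !card_ord).
by exists xi, p0.
Qed.

Lemma exists_line_in_kernel (xi : coord -> rat) : exists w : coord -> rat,
  (exists p, w p != 0) /\ forall i, \sum_p xi p * mulb_coord i w p = 0.
Proof.
have [w [w_neq0 w_ker]] := @underdetermined_system _ _ _
  (fun i (p : coord) => \sum_k xi (p.1, k) * c i p.2 k) ltac:(by rewrite card_prod !card_ord).
by exists w; split=> // i; rewrite mulb_coord_transpose.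
Qed.

Section Line.
Variables (xi w : coord -> rat) (p0 : coord).
Hypothesis xi_p0 : xi p0 != 0.
Hypothesis xi_periods : forall l, \sum_p xi p * period_coord l p = 0.
Hypothesis xi_line : forall i, \sum_p xi p * mulb_coord i w p = 0.
Hypothesis w_neq0 : exists p, w p != 0.

Definition line_vec : 'cV[R[i]]_2 := \col_r rcomb b (fun k => w (r, k)).

Lemma line_vecZ_eq0 lam : lam *: line_vec = 0 -> lam = 0.
Proof.
case: w_neq0 => -[r k] wrk /matrixP/(_ r 0); rewrite !mxE => /eqP.
by rewrite mulf_eq0 (negbTE (rcomb_neq0 b_free _)) ?orbF => [/eqP|]; last exists k.
Qed.

Definition line_resid (m : 'I_4 -> int) (y : 'I_3 -> rat) (p : coord) : rat :=
  \sum_l (m l)%:~R * period_coord l p - \sum_i y i * mulb_coord i w p.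

Lemma line_resid_functional m y : \sum_p xi p * line_resid m y p = 0.
Proof.
rewrite /line_resid; under eq_bigr do rewrite mulrBr !mulr_sumr.
rewrite sumrB exchange_big [X in _ - X]exchange_big /= !big1 ?subrr // => [i|l] _.
  by under eq_bigr do rewrite mulrCA; rewrite -mulr_sumr xi_line mulr0.
by under eq_bigr do rewrite mulrCA; rewrite -mulr_sumr xi_periods mulr0.
Qed.

Lemma lattice_pt_on_line m y : (forall p, p != p0 -> line_resid m y p = 0) ->
  lattice_pt tau m = rcomb b y *: line_vec.
Proof.
move=> resid0; have {}resid0 p : line_resid m y p = 0.
  case: (eqVneq p p0) => [->|]; last exact: resid0.
  exact: redundant_equation xi_p0 (line_resid_functional m y) resid0.
apply/matrixP => r s; rewrite ord1 lattice_pt_coord [RHS]mxE mxE (rcombM b_mul).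
apply: eq_bigr => k _; congr (ratr _ * _); apply/eqP; rewrite -subr_eq0; apply/eqP.
exact: resid0 (r, k).
Qed.

Lemma exists_lattice_pt_on_line (ex : 'I_4 -> rat) : exists m lam,
  [/\ exists l, m l != 0, lattice_pt tau m = lam *: line_vec & \sum_l (m l)%:~R * ex l = 0].
Proof.
(* The p0-th equation follows from the others (lattice_pt_on_line), so g puts the
   condition on ex in its place: 6 equations in the 7 unknowns (m, y). *)
pose g (p : coord) (u : 'I_4 + 'I_3) : rat := match u with
  | inl l => if p == p0 then ex l else period_coord l p
  | inr i => if p == p0 then 0 else - mulb_coord i w p end.
have [z [[u zu] zE]] := @underdetermined_int_system _ _ g
  ltac:(by rewrite card_prod card_sum !card_ord).
pose m l := z (inl l); pose y i : rat := (z (inr i))%:~R.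
have {}zE p : \sum_l (m l)%:~R * g p (inl l) + \sum_i y i * g p (inr i) = 0.
  by have := zE p; rewrite big_sumType.
have m_line : lattice_pt tau m = rcomb b y *: line_vec.
  apply: lattice_pt_on_line => p p_neq0; move: (zE p); rewrite /g (negbTE p_neq0).
  by under [X in _ + X]eq_bigr do rewrite mulrN; rewrite sumrN.
exists m, (rcomb b y); split=> //; last first.
  move: (zE p0); rewrite /g eqxx.
  by under [X in _ + X]eq_bigr do rewrite mulr0; rewrite big1_eq addr0.
case: u zu => [l|i] zu; first by exists l.
apply/existsP; rewrite -negb_forall; apply/negP => /forallP m0.
have : rcomb b y != 0 by apply: (rcomb_neq0 b_free); exists i; rewrite intr_eq0.
apply/negP/negPn/eqP/line_vecZ_eq0; rewrite -m_line /lattice_pt.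
by rewrite !(eqP (m0 _)) !scale0r !addr0.
Qed.

End Line.

Lemma independent_lattice_pts_on_line : exists (v : 'cV[R[i]]_2) (m m' : 'I_4 -> int)
  (lam lam' : R[i]) (l0 l1 : 'I_4),
  [/\ lattice_pt tau m = lam *: v, lattice_pt tau m' = lam' *: v,
      m l0 != 0, m' l0 = 0 & m' l1 != 0].
Proof.
have [xi [p0 [xi_p0 xi_periods]]] := exists_functional_vanishing_on_periods.
have [w [w_neq0 xi_line]] := exists_line_in_kernel xi.
have [m [lam [[l0 ml0] m_line _]]] :=
  exists_lattice_pt_on_line xi_p0 xi_periods xi_line w_neq0 (fun=> 0).
have [m' [lam' [[l1 m'l1] m'_line m'l0]]] :=
  exists_lattice_pt_on_line xi_p0 xi_periods xi_line w_neq0 (fun l => (l == l0)%:R).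
exists (line_vec w), m, m', lam, lam', l0, l1; split=> //.
move: m'l0; under eq_bigr do rewrite mulr_natr mulrb.
by rewrite -big_mkcond big_pred1_eq => /eqP; rewrite intr_eq0 => /eqP.
Qed.

End CubicPeriodField.

Theorem mainTheorem10 (R : realType) (tau : 'M[R[i]]_2) :
  simple_abelian_surface tau -> ~ dA_eq tau 3.
Proof.
move=> [[tau_ok _] no_elliptic] [b [b_field [b_free b_span]]]; apply: no_elliptic.
have tau_gen r s : gen_field (entries tau) (tau r s) by apply: gen_field_mem; exists r, s.
have [t tau_coord] := rcomb_coords2 (fun r s => b_span _ (tau_gen r s)).
have [e one_coord] := b_span 1 (@gen_field1 R (entries tau)).
have [c b_mul] := rcomb_coords2 (fun i j => b_span _ (gen_fieldM (b_field i) (b_field j))).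
have [v [m [m' [lam [lam' [l0 [l1 [m_line m'_line ml0 m'l0 m'l1]]]]]]]] :=
  independent_lattice_pts_on_line b_free b_mul tau_coord one_coord.
exists (lattice_pt tau m), (lattice_pt tau m'); do 2 (split; first by eexists).
split; first by rewrite m_line m'_line det_row_mx_collinear.
exact: lattice_pt_real_indep tau_ok ml0 m'l0 m'l1.
Qed.
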